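(* Let $S$, $S'$ be Polish spaces, $(X_n)$, $(Y_n)$ sequences of $S$-valued random variables, and $g_n:S\to S'$ continuous functions. If $X_n//Y_n\to1$, then $g_n(X_n)//g_n(Y_n)\to1$.
   Context: For a random variable $X$, $\mathbb{P}_X$ denotes its law. Write $X_n//Y_n\to1$ if for each $n$, $\mathbb{P}_{X_n}$ is absolutely continuous with respect to $\mathbb{P}_{Y_n}$ with a density $f_n\ge0$ ($\mathbb{P}_{X_n}=f_n\mathbb{P}_{Y_n}$), and for every $\varepsilon>0$, $\mathbb{P}_{Y_n}(\{x:|f_n(x)-1|<\varepsilon\})\to1$ as $n\to\infty$. *)

From HB Require Import structures.
From mathcomp Require Import all_boot all_order all_algebra.
From mathcomp Require Import all_classical all_reals all_analysis.
Set Implicit Arguments. Unset Strict Implicit. Unset Printing Implicit Defensive.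
Import Order.TTheory GRing.Theory Num.Theory.
Import numFieldNormedType.Exports.
Local Open Scope classical_set_scope.
Local Open Scope ring_scope.

Definition borel (T : ptopologicalType) := g_sigma_algebraType (@open T).

Definition polish (R : realType) (T : topologicalType) : Prop :=
  exists d : T -> T -> R,
    [/\ (forall x y, 0 <= d x y),
        (forall x y, d x y = 0 <-> x = y),
        (forall x y, d x y = d y x),
        (forall x y z, d x z <= d x y + d y z) &
        (forall A : set T, open A <->
           (forall x, A x -> exists2 e : R, 0 < e & [set y | d x y < e] `<=` A))]
    /\ (forall u : nat -> T,
          (forall e : R, 0 < e -> exists N, forall m n,
             (N <= m)%N -> (N <= n)%N -> d (u m) (u n) < e) ->
          exists x : T, u @ \oo --> x)
    /\ (exists D : set T, countable D /\ closure D = setT).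

Definition law d d' (O : measurableType d) (T : measurableType d') (R : realType)
  (P : probability O R) (X : O -> T) : set T -> \bar R := pushforward P X.

Definition has_density d (T : measurableType d) (R : realType)
  (mu nu : set T -> \bar R) (f : T -> R) : Prop :=
  [/\ (forall x, 0 <= f x), measurable_fun setT f &
      forall A, measurable A -> mu A = (\int[nu]_(x in A) (f x)%:E)%E].

(* X_n // Y_n -> 1, stated on the laws mu n = P_{X_n}, nu n = P_{Y_n}. *)
Definition ratio_to_one d (T : measurableType d) (R : realType)
  (mu nu : nat -> set T -> \bar R) : Prop :=
  exists f : nat -> T -> R,
    (forall n, has_density (mu n) (nu n) (f n)) /\
    (forall eps : R, 0 < eps ->
       (fun n => nu n [set x | `|f n x - 1| < eps]) @ \oo --> 1%E).

(* For laws mu, nu with density f, splitting along the event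
   |f - 1| < delta gives |mu A - nu A| <= delta + nu (|f - 1| >= delta) for
   every measurable A, so the total variation distance of the laws tends to 0.
   This bound passes to the image laws under any measurable map, and
   continuous maps are Borel.  The image laws again have a density h
   (Radon-Nikodym), and conversely a total variation bound D forces
   eps * nu (|h - 1| >= eps) <= 2 D, since on {h >= 1 + eps} and on
   {h <= 1 - eps} the two measures differ by at least eps times the mass. *)

From HB Require Import structures.
From mathcomp Require Import all_boot all_order all_algebra.
From mathcomp Require Import all_classical all_reals all_analysis.
From mathcomp Require Import ring lra measurable_realfun.
Import Order.TTheory GRing.Theory Num.Theory.
Import numFieldNormedType.Exports.
Local Open Scope classical_set_scope.
Local Open Scope ring_scope.

Lemma measurable_preimage_itv {d} {T : measurableType d} {R : realType}
    (k : T -> R) (i : interval R) :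
  measurable_fun setT k -> measurable (k @^-1` [set` i]).
Proof.
by move=> mk; rewrite -[_ @^-1` _]setTI; exact: mk (measurable_itv i).
Qed.

Lemma continuous_measurable_borel {S S' : ptopologicalType} {g : S -> S'} :
  continuous g -> measurable_fun setT (g : borel S -> borel S').
Proof.
move=> cg.
apply: (@measurability _ _ (borel S) (borel S') setT g (@open S')) => //.
move=> _ [B oB <-]; apply: sub_sigma_algebra; rewrite setTI.
exact: (proj1 (continuousP g)).
Qed.

Section fine_probability.
Context {d} {T : measurableType d} {R : realType} (P : probability T R).

Lemma probabilityE {A} : measurable A -> P A = (fine (P A))%:E.
Proof. by move=> mA; rewrite fineK // fin_num_measure. Qed.

Lemma fine_probability_le1 {A} : measurable A -> fine (P A) <= 1.
Proof. by move=> mA; rewrite -lee_fin -probabilityE // probability_le1. Qed.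

Lemma fine_probability_ge0 A : 0 <= fine (P A).
Proof. exact/fine_ge0/measure_ge0. Qed.

Lemma fine_probability_setC {A} :
  measurable A -> fine (P (~` A)) = 1 - fine (P A).
Proof. by move=> mA; rewrite probability_setC // (probabilityE mA). Qed.

Lemma le_fine_probability {A B} : measurable A -> measurable B -> A `<=` B ->
  fine (P A) <= fine (P B).
Proof.
move=> mA mB AB; rewrite -lee_fin -!probabilityE //.
by apply: le_measure; rewrite ?inE.
Qed.

Lemma fine_probabilityU2 {A B} : measurable A -> measurable B ->
  fine (P (A `|` B)) <= fine (P A) + fine (P B).
Proof.
move=> mA mB; rewrite -lee_fin EFinD -!probabilityE //; last exact: measurableU.
exact: measureU2.
Qed.

End fine_probability.

Section density.
Context {d} {T : measurableType d} {R : realType} {mu nu : probability T R}.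
Context {f : T -> R}.
Hypothesis hf : has_density mu nu f.

Let f_ge0 x : 0 <= f x. Proof. by case: hf. Qed.
Let mf : measurable_fun setT f. Proof. by case: hf. Qed.
Let muE A : measurable A -> mu A = (\int[nu]_(x in A) (f x)%:E)%E.
Proof. by case: hf => _ _; exact. Qed.

Lemma density_lower_bound B c : measurable B -> (forall x, B x -> c <= f x) ->
  c * fine (nu B) <= fine (mu B).
Proof.
move=> mB cf; have [c_le0|c_gt0] := leP c 0.
  apply: (le_trans _ (fine_probability_ge0 mu B)).
  by rewrite mulr_le0_ge0 // fine_probability_ge0.
rewrite -lee_fin EFinM -(probabilityE nu mB) -(probabilityE mu mB) muE //.
rewrite -integral_cst //; apply: ge0_le_integral => //.
- by move=> x _; rewrite lee_fin ltW.
- by apply/measurable_EFinP; exact: measurable_funTS.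
Qed.

Lemma density_upper_bound B c : measurable B -> (forall x, B x -> f x <= c) ->
  fine (mu B) <= c * fine (nu B).
Proof.
move=> mB fc.
rewrite -lee_fin EFinM -(probabilityE nu mB) -(probabilityE mu mB) muE //.
rewrite -integral_cst //; apply: ge0_le_integral => //.
- by move=> x _; rewrite lee_fin.
- by apply/measurable_EFinP; exact: measurable_funTS.
Qed.

Lemma measurable_density_near_one δ : measurable [set x | `|f x - 1| < δ].
Proof.
have mf1 : measurable_fun setT (fun x => `|f x - 1|).
  by apply: measurableT_comp => //; exact: measurable_funB.
have := measurable_preimage_itv _ `]-oo, δ[ mf1.
by congr measurable; apply/seteqP; split => x /=; rewrite in_itv.
Qed.

Lemma density_measure_le A δ : measurable A -> 0 < δ ->
  fine (nu A) <= fine (mu A) + δ + (1 - fine (nu [set x | `|f x - 1| < δ])).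
Proof.
move=> mA δ_gt0; set U := [set x | `|f x - 1| < δ].
have mU : measurable U := measurable_density_near_one δ.
have mAU : measurable (A `&` U) by exact: measurableI.
have cover : fine (nu A) <= fine (nu (A `&` U)) + fine (nu (~` U)).
  apply: (le_trans _ (fine_probabilityU2 nu mAU (measurableC mU))).
  apply: le_fine_probability => //.
    by apply: measurableU => //; exact: measurableC.
  by move=> x Ax; have [Ux|nUx] := pselect (U x); [left|right].
have lower : (1 - δ) * fine (nu (A `&` U)) <= fine (mu A).
  apply: (le_trans _ (le_fine_probability mu mAU mA (@subIsetl _ _ _))).
  apply: density_lower_bound => // x [_]; rewrite /U /= ltr_norml; lra.
have := fine_probability_le1 nu mAU; have := fine_probability_ge0 nu (A `&` U).
rewrite fine_probability_setC // in cover; nra.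
Qed.

Lemma density_measure_dist A δ : measurable A -> 0 < δ ->
  `|fine (mu A) - fine (nu A)| <=
    δ + (1 - fine (nu [set x | `|f x - 1| < δ])).
Proof.
move=> mA δ_gt0; have := density_measure_le _ _ mA δ_gt0.
have := density_measure_le _ _ (measurableC mA) δ_gt0.
rewrite !fine_probability_setC // ler_norml; lra.
Qed.

Lemma density_deficit_le eps D : 0 < eps ->
    (forall A, measurable A -> `|fine (mu A) - fine (nu A)| <= D) ->
  1 - fine (nu [set x | `|f x - 1| < eps]) <= 2 / eps * D.
Proof.
move=> eps_gt0 dist_le.
set B := f @^-1` [set` `[1 + eps, +oo[].
set C := f @^-1` [set` `]-oo, 1 - eps]].
have mB : measurable B by exact: measurable_preimage_itv.
have mC : measurable C by exact: measurable_preimage_itv.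
have mV := measurable_density_near_one eps.
have nuB : eps * fine (nu B) <= D.
  have Bf x : B x -> 1 + eps <= f x by rewrite /B /= in_itv /= andbT.
  have := density_lower_bound _ _ mB Bf.
  have := dist_le _ mB; rewrite ler_norml => /andP[_]; nra.
have nuC : eps * fine (nu C) <= D.
  have Cf x : C x -> f x <= 1 - eps by rewrite /C /= in_itv.
  have := density_upper_bound _ _ mC Cf.
  have := dist_le _ mC; rewrite ler_norml => /andP[+ _]; nra.
have cover :
    1 - fine (nu [set x | `|f x - 1| < eps]) <= fine (nu B) + fine (nu C).
  rewrite -fine_probability_setC //.
  apply: (le_trans _ (fine_probabilityU2 nu mB mC)).
  apply: le_fine_probability => //; [exact: measurableC | exact: measurableU|].
  move=> x /= /negP; rewrite -leNgt ler_normr /B /C /= !in_itv /= andbT.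
  by case/orP=> ?; [left|right]; lra.
by rewrite mulrAC ler_pdivlMr //; nra.
Qed.

End density.

Lemma density_dominates {d} {T : measurableType d} {R : realType}
    (mu nu : probability T R) (f : T -> R) :
  has_density mu nu f -> mu `<< nu.
Proof.
move=> [_ mf muE]; apply/null_content_dominatesP => A mA nuA0.
rewrite muE //; apply: null_set_integral => //.
by apply/measurable_EFinP; exact: measurable_funTS.
Qed.

Lemma distribution_density {d d'} {T : measurableType d}
    {T' : measurableType d'} {R : realType} {mu nu : probability T R}
    {f : T -> R} (G : {mfun T >-> T'}) :
  has_density mu nu f ->
  exists h, has_density (distribution mu G) (distribution nu G) h.
Proof.
move=> /density_dominates mu_nu.
have mu'_nu' : distribution mu G `<< distribution nu G.
  move/null_content_dominatesP : mu_nu => mu_nu.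
  by apply/null_content_dominatesP => A mA; exact/mu_nu/measurable_funPTI.
pose rn := Radon_Nikodym_SigmaFinite.f (distribution mu G) (distribution nu G).
have rnE y : rn y = (fine (rn y))%:E.
  by rewrite fineK //; exact: Radon_Nikodym_SigmaFinite.f_fin_num.
exists (fine \o rn); split.
- by move=> y; apply: fine_ge0; exact: Radon_Nikodym_SigmaFinite.f_ge0.
- apply/measurable_EFinP; apply: (eq_measurable_fun _ _ (measurable_int _
    (Radon_Nikodym_SigmaFinite.f_integrable mu'_nu'))) => y _.
  by rewrite /= -rnE.
- move=> A mA; rewrite (Radon_Nikodym_SigmaFinite.f_integral mu'_nu' mA).
  by apply: eq_integral => y _; rewrite -rnE.
Qed.

Lemma cvg_to1_of_deficit_le (R : realType) (v : nat -> R) (u : R -> nat -> R)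
    (K : R) :
  0 < K -> (forall n, v n <= 1) ->
  (forall δ : R, 0 < δ -> u δ @ \oo --> (1 : R)) ->
  (forall δ : R, 0 < δ -> forall n, 1 - v n <= K * (δ + (1 - u δ n))) ->
  v @ \oo --> (1 : R).
Proof.
move=> K_gt0 v_le1 u_cvg v_deficit; apply/cvgrPdist_lt => η η_gt0.
set δ := η / (4 * K).
have δ_gt0 : 0 < δ by rewrite divr_gt0 // mulr_gt0.
have Kδ : K * δ = η / 4 by rewrite /δ; field; rewrite gt_eqF.
have /cvgrPdist_lt /(_ _ δ_gt0) := u_cvg _ δ_gt0.
apply: filterS => n /(le_lt_trans (ler_norm _)) u_near.
rewrite ger0_norm ?subr_ge0 //.
have := v_deficit _ δ_gt0 n; nra.
Qed.

Theorem ratio_to_one_distribution d d' (T : measurableType d)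
    (T' : measurableType d') (R : realType) (mu nu : nat -> probability T R)
    (G : nat -> {mfun T >-> T'}) :
  ratio_to_one (fun n => mu n) (fun n => nu n) ->
  ratio_to_one (fun n => distribution (mu n) (G n))
               (fun n => distribution (nu n) (G n)).
Proof.
move=> [f [f_dens f_cvg]].
have [h h_dens] := choice (fun n => distribution_density (G n) (f_dens n)).
exists h; split => // eps eps_gt0.
apply/fine_cvgP; split.
  apply: nearW => n; apply: fin_num_measure.
  exact: measurable_density_near_one (h_dens n) _.
apply: (@cvg_to1_of_deficit_le _ _
  (fun δ n => fine (nu n [set x | `|f n x - 1| < δ])) (2 / eps)).
- by rewrite divr_gt0.
- by move=> n; apply: fine_probability_le1; exact: measurable_density_near_one.
- by move=> δ δ_gt0; have /fine_cvgP[] := f_cvg _ δ_gt0.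
- move=> δ δ_gt0 n; apply: (density_deficit_le (h_dens n)) eps_gt0 _ => A mA.
  exact: density_measure_dist (f_dens n) _ _ (measurable_funPTI _ mA) δ_gt0.
Qed.

Theorem lemma11 (R : realType) (S S' : ptopologicalType)
  (polS : polish R S) (polS' : polish R S')
  (dO dO' : nat -> measure_display)
  (O : forall n, measurableType (dO n)) (O' : forall n, measurableType (dO' n))
  (P : forall n, probability (O n) R) (Q : forall n, probability (O' n) R)
  (X : forall n, O n -> borel S) (Y : forall n, O' n -> borel S)
  (mX : forall n, measurable_fun setT (X n))
  (mY : forall n, measurable_fun setT (Y n))
  (g : nat -> S -> S') (cg : forall n, continuous (g n)) :
  ratio_to_one (fun n => law (P n) (X n)) (fun n => law (Q n) (Y n)) ->
  ratio_to_one
    (fun n => law (P n) (fun w => (g n (X n w) : borel S')))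
    (fun n => law (Q n) (fun w => (g n (Y n w) : borel S'))).
Proof.
pose Xm n := mfun_Sub (mem_set (mX n)).
pose Ym n := mfun_Sub (mem_set (mY n)).
pose Gm n := mfun_Sub (mem_set (continuous_measurable_borel (cg n))).
exact: (@ratio_to_one_distribution _ _ _ _ _
  (fun n => distribution (P n) (Xm n)) (fun n => distribution (Q n) (Ym n)) Gm).
Qed.
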